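(* Let $\mathcal{B}$ be a cat-graph and $F$ a trihomomorphism $\mathcal{B}^{\mathrm{coop}}\to\mathbf{BiCat}$ (in the sense below). Fix objects $b,c$ of $\mathcal{B}$, $x$ of $Fb$ and $y$ of $Fc$. Assume $\mathcal{B}(b,c)$ is a finite category and $k_\bullet$ is a coweighting on its similarity matrix $\zeta_{\mathcal{B}(b,c)}$, and that for each 1-morphism $f : b\to c$ the category $Fb(x,f^*y)$ is finite and $k_\bullet$ is a coweighting on its similarity matrix $\zeta_{Fb(x,f^*y)}$. Then the function $(f,u)\mapsto k_{(f,u)} := k_f\,k_u$ is a coweighting on the similarity matrix of $\mathrm{Gr}(F)((b,x),(c,y))$, i.e. for every object $(g,v)$, \[ \sum_{(f,u)} k_f k_u\,\#\mathrm{Gr}(F)((b,x),(c,y))\big((f,u),(g,v)\big) = 1. \]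
   Context: For finite sets $I,J$ and $\zeta : I\times J\to\mathbb{Q}$, a coweighting is $k_\bullet : I\to\mathbb{Q}$ with $\sum_i k_i\zeta(i,j)=1$ for all $j$. The similarity matrix of a finite category $C$ is $\zeta_C(s,t)=\#C(s,t)$ on $\mathrm{ob}(C)\times\mathrm{ob}(C)$. A cat-graph $\mathcal{B}$ is a set of objects with a small category $\mathcal{B}(b,c)$ for each pair (objects = 1-morphisms, morphisms = 2-morphisms). A trihomomorphism $F : \mathcal{B}^{\mathrm{coop}}\to\mathbf{BiCat}$ consists of a bicategory $Fb$ for each object $b$, a lax functor $f^* : Fc\to Fb$ for each 1-morphism $f : b\to c$, and a lax natural transformation $\alpha^* : g^*\Rightarrow f^*$ for each 2-morphism $\alpha : f\Rightarrow g$, with component 1-morphisms $\alpha^*_y : g^*y\to f^*y$ in $Fb$. The Grothendieck construction $\mathrm{Gr}(F)$ is the cat-graph whose objects are pairs $(b,x)$ with $x\in\mathrm{ob}(Fb)$; a 1-morphism $(b,x)\to(c,y)$ is a pair $(f,u)$ with $f : b\to c$ in $\mathcal{B}$ and $u : x\to f^*y$ in $Fb$; a 2-morphism $(f,u)\Rightarrow(g,v)$ is a pair $(\alpha,\beta)$ with $\alpha : f\Rightarrow g$ in $\mathcal{B}$ and $\beta : u\Rightarrow\alpha^*_y\circ v$ a 2-morphism in $Fb$. *)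

From HB Require Import structures.
From mathcomp Require Import all_boot all_order all_algebra.
Set Implicit Arguments. Unset Strict Implicit. Unset Printing Implicit Defensive.
Import Order.TTheory GRing.Theory Num.Theory.
Local Open Scope ring_scope.

Record FinCat := {
  fob : finType;
  fhom : fob -> fob -> finType;
  fid : forall s, fhom s s;
  fcomp : forall s t r, fhom t r -> fhom s t -> fhom s r;
  fcomp_id_l : forall s t (h : fhom s t), fcomp (fid t) h = h;
  fcomp_id_r : forall s t (h : fhom s t), fcomp h (fid s) = h;
  fcomp_assoc : forall s t r q (h1 : fhom r q) (h2 : fhom t r) (h3 : fhom s t),
      fcomp h1 (fcomp h2 h3) = fcomp (fcomp h1 h2) h3
}.

Definition coweighting (I J : finType) (zeta : I -> J -> rat) (k : I -> rat) :=
  forall j : J, \sum_(i : I) k i * zeta i j = 1.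

Definition simmx (C : FinCat) (s t : fob C) : rat := (#|fhom s t|)%:R.

(* The hom-category Gr(F)((b,x),(c,y)) of the Grothendieck construction,
   for fixed b, c, x in Fb, y in Fc.  It is determined by:
   - Bbc     : the hom-category B(b,c);
   - H f     : the hom-category Fb(x, f^* y), for each 1-morphism f : b -> c;
   - post a  : for a 2-morphism a : f => g, the map v |-> a^*_y o v sending a
               1-morphism v : x -> g^* y of Fb to the 1-morphism
               a^*_y o v : x -> f^* y (composition of 1-cells in Fb). *)
Definition Gr_ob (Bbc : FinCat) (H : fob Bbc -> FinCat) : finType :=
  {f : fob Bbc & fob (H f)}.

Definition Gr_hom (Bbc : FinCat) (H : fob Bbc -> FinCat)
  (post : forall f g : fob Bbc, fhom f g -> fob (H g) -> fob (H f))
  (fu gv : Gr_ob H) : finType :=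
  {a : fhom (tag fu) (tag gv) & fhom (tagged fu) (post _ _ a (tagged gv))}.

Definition Gr_simmx (Bbc : FinCat) (H : fob Bbc -> FinCat)
  (post : forall f g : fob Bbc, fhom f g -> fob (H g) -> fob (H f))
  (fu gv : Gr_ob H) : rat := (#|Gr_hom post fu gv|)%:R.

From HB Require Import structures.
From mathcomp Require Import all_boot all_order all_algebra.
Import Order.TTheory GRing.Theory Num.Theory.
Local Open Scope ring_scope.

(* Counting morphisms (a, beta) : (f,u) => (g,v) first by the 2-morphism a
   shows that the similarity matrix of Gr(F) is, column by column, a sum of
   columns of the similarity matrices of the fibres Fb(x, f^* y).  A coweighting
   of a fibre sends such a sum of N columns to N, so summing over (f,u) against
   k_f k_u reduces to the coweighting equation for B(b,c). *)

Lemma card_tagged_natr (R : pzSemiRingType) (I : finType) (J : I -> finType) :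
  #|{: {i : I & J i}}|%:R = \sum_(i : I) #|J i|%:R :> R.
Proof. by rewrite card_tagged sumnE big_map big_enum natr_sum. Qed.

Lemma Gr_simmxE (Bbc : FinCat) (H : fob Bbc -> FinCat)
    (post : forall f g : fob Bbc, fhom f g -> fob (H g) -> fob (H f))
    (fu gv : Gr_ob H) :
  Gr_simmx post fu gv =
  \sum_(a : fhom (tag fu) (tag gv)) simmx (tagged fu) (post _ _ a (tagged gv)).
Proof. exact: card_tagged_natr. Qed.

Lemma coweighting_sum_columns {I J K : finType} {zeta : I -> J -> rat}
    {k : I -> rat} (col : K -> J) :
  coweighting zeta k -> \sum_(i : I) k i * \sum_(a : K) zeta i (col a) = #|K|%:R.
Proof.
move=> hk; rewrite -sum1_card natr_sum.
under [LHS]eq_bigr => i _ do rewrite mulr_sumr.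
by rewrite exchange_big; apply: eq_bigr => a _; exact: hk.
Qed.

Theorem lemma3p30 (Bbc : FinCat) (H : fob Bbc -> FinCat)
  (post : forall f g : fob Bbc, fhom f g -> fob (H g) -> fob (H f))
  (kB : fob Bbc -> rat) (kF : forall f : fob Bbc, fob (H f) -> rat)
  (hkB : coweighting (@simmx Bbc) kB)
  (hkF : forall f : fob Bbc, coweighting (@simmx (H f)) (kF f)) :
  coweighting (Gr_simmx post) (fun fu : Gr_ob H => kB (tag fu) * kF (tag fu) (tagged fu)).
Proof.
move=> gv; rewrite -(hkB (tag gv)).
rewrite -(sig_big_dep xpredT (fun _ => xpredT) (fun f (u : fob (H f)) =>
  kB f * kF f u * Gr_simmx post (Tagged (fun f => fob (H f)) u) gv)) //=.
apply: eq_bigr => f _.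
under eq_bigr => u _ do rewrite Gr_simmxE -mulrA.
by rewrite -mulr_sumr /= (coweighting_sum_columns _ (hkF f)).
Qed.
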